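(* Let $\mathcal{X}=\{\{\mathbf{x}^{(\mathbf{n},m)}\in\mathbb{R}^D\}_{\mathbf{n}\in[N]^P}\}_{m=1}^M$ and let $\bar{\mathcal{K}}\subseteq[N]^P$ have size divisible by $2^P$. Then there exists a complete undirected weighted graph with vertex set $\bar{\mathcal{K}}$ and edge weights $w$ such that for every partition of $\bar{\mathcal{K}}$ into $2^P$ equally sized disjoint sets $\{\mathcal{K}_{\mathbf{k}}\}_{\mathbf{k}\in[2]^P}$, the weight of the induced $2^P$-cut, $\frac12\sum_{\mathbf{k}\in[2]^P}\sum_{\mathbf{n}\in\mathcal{K}_{\mathbf{k}},\,\mathbf{n}'\in\bar{\mathcal{K}}\setminus\mathcal{K}_{\mathbf{k}}}w(\{\mathbf{n},\mathbf{n}'\})$, is equal, up to multiplicative and additive constants independent of the partition, to $\frac1{2^P}\sum_{\mathbf{k}\in[2]^P}\mathrm{SE}(\mathcal{X};\mathcal{K}_{\mathbf{k}})$. Consequently, minimizing $\frac1{2^P}\sum_{\mathbf{k}}\mathrm{SE}(\mathcal{X};\mathcal{K}_{\mathbf{k}})$ over such balanced partitions is a minimum balanced $2^P$-cut problem over a complete graph with $|\bar{\mathcal{K}}|$ vertices.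
   Context: For the instance set $\mathcal{X}$ and features $\mathbf{n},\mathbf{n}'\in[N]^P$, let $\mu^{(\mathbf{n})}=\frac1M\sum_m\mathbf{x}^{(\mathbf{n},m)}$, $\Sigma^{(\mathbf{n})}=\frac1M\sum_m(\mathbf{x}^{(\mathbf{n},m)}-\mu^{(\mathbf{n})})\otimes(\mathbf{x}^{(\mathbf{n},m)}-\mu^{(\mathbf{n})})$, $\Sigma^{(\mathbf{n},\mathbf{n}')}=\frac1M\sum_m(\mathbf{x}^{(\mathbf{n},m)}-\mu^{(\mathbf{n})})\otimes(\mathbf{x}^{(\mathbf{n}',m)}-\mu^{(\mathbf{n}')})$, and the multivariate Pearson correlation $p_{\mathbf{n},\mathbf{n}'}:=\mathrm{tr}(\Sigma^{(\mathbf{n},\mathbf{n}')})/\mathrm{tr}((\Sigma^{(\mathbf{n})}\Sigma^{(\mathbf{n}')})^{1/2})$. For $\mathcal{K}\subseteq[N]^P$, the surrogate entanglement is $\mathrm{SE}(\mathcal{X};\mathcal{K}):=\sum_{\mathbf{n}\in\mathcal{K},\,\mathbf{n}'\in[N]^P\setminus\mathcal{K}}p_{\mathbf{n},\mathbf{n}'}$. *)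

From Stdlib Require Import ClassicalEpsilon.
From mathcomp Require Import all_boot all_order all_algebra.
From mathcomp Require Import reals.
Set Implicit Arguments. Unset Strict Implicit. Unset Printing Implicit Defensive.
Import Order.TTheory GRing.Theory Num.Theory.
Local Open Scope ring_scope.

Section Defs.
Variables (R : realType) (N P D M : nat).

Definition idx := {ffun 'I_P -> 'I_N}.
Definition idx2 := {ffun 'I_P -> 'I_2}.

Definition dataset := idx -> 'I_M -> 'cV[R]_D.

Definition outer (u v : 'cV[R]_D) : 'M[R]_D := u *m v^T.

Definition mean (x : dataset) (n : idx) : 'cV[R]_D :=
  (M%:R)^-1 *: \sum_(m < M) x n m.

Definition cov (x : dataset) (n : idx) : 'M[R]_D :=
  (M%:R)^-1 *: \sum_(m < M) outer (x n m - mean x n) (x n m - mean x n).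

Definition cross_cov (x : dataset) (n n' : idx) : 'M[R]_D :=
  (M%:R)^-1 *: \sum_(m < M) outer (x n m - mean x n) (x n' m - mean x n').

Definition nonneg_spectrum (S : 'M[R]_D) : Prop :=
  exists c : 'I_D -> R, (forall i, 0 <= c i) /\
    char_poly S = \prod_(i < D) ('X - (c i)%:P).

Definition is_principal_sqrt (A S : 'M[R]_D) : Prop :=
  S *m S = A /\ nonneg_spectrum S.

(* the matrix square root A^{1/2} (a principal square root; its trace is
   independent of the choice); 0 if no such root exists *)
Definition sqrtm (A : 'M[R]_D) : 'M[R]_D :=
  match excluded_middle_informative (exists S, is_principal_sqrt A S) with
  | left h => proj1_sig (constructive_indefinite_description _ h)
  | right _ => 0
  end.

Definition pearson (x : dataset) (n n' : idx) : R :=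
  \tr (cross_cov x n n') / \tr (sqrtm (cov x n *m cov x n')).

Definition SE (x : dataset) (K : {set idx}) : R :=
  \sum_(n in K) \sum_(n' in ~: K) pearson x n n'.

Definition balanced_partition (Kbar : {set idx}) (K : idx2 -> {set idx}) : Prop :=
  [/\ \bigcup_(k : idx2) K k = Kbar,
      (forall k k' : idx2, k != k' -> [disjoint K k & K k']) &
      (forall k k' : idx2, #|K k| = #|K k'|)].

Definition cut_weight (w : idx -> idx -> R) (Kbar : {set idx})
    (K : idx2 -> {set idx}) : R :=
  2^-1 * \sum_(k : idx2) \sum_(n in K k) \sum_(n' in Kbar :\: K k) w n n'.

End Defs.

(** Symmetrizing the Pearson correlations, [w n n' := p n n' + p n' n], turns the
    cut weight into the sum of [p] over ordered pairs of [Kbar] lying in different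
    blocks.  The same pairs make up [\sum_k SE(K_k)], apart from the pairs leaving
    [Kbar], whose total does not depend on the partition.  Hence the two
    objectives differ by the factor [2^P] and an additive constant. *)
From mathcomp Require Import all_boot all_order all_algebra.
From mathcomp Require Import reals.
Import Order.TTheory GRing.Theory Num.Theory.
Local Open Scope ring_scope.

Lemma big_setD_sub (R : zmodType) (T : finType) (A B : {set T}) (f : T -> R) :
  B \subset A -> \sum_(i in A :\: B) f i = \sum_(i in A) f i - \sum_(i in B) f i.
Proof.
by move=> sBA; rewrite [in RHS](big_setID B) /= (setIidPr sBA) addrAC subrr add0r.
Qed.

Definition symmetrize {T : Type} {R : zmodType} (f : T -> T -> R) : T -> T -> R :=
  fun n n' => f n n' + f n' n.

Section BlockSums.
Variables (R : zmodType) (T I : finType) (A : {set T}) (K : I -> {set T}).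
Hypothesis cupK : \bigcup_k K k = A.
Hypothesis disjK : forall k k', k != k' -> [disjoint K k & K k'].

Lemma sub_block k : K k \subset A.
Proof. by rewrite -cupK; apply: bigcup_sup. Qed.

Lemma sum_blocks (g : T -> R) : \sum_k \sum_(n in K k) g n = \sum_(n in A) g n.
Proof. by rewrite -cupK partition_disjoint_bigcup. Qed.

Lemma sum_between_blocks (f : T -> T -> R) :
  \sum_k \sum_(n in K k) \sum_(n' in A :\: K k) f n n' =
  \sum_(n in A) \sum_(n' in A) f n n' - \sum_k \sum_(n in K k) \sum_(n' in K k) f n n'.
Proof.
rewrite -(sum_blocks (fun n => \sum_(n' in A) f n n')) -sumrB.
apply: eq_bigr => k _; rewrite -sumrB; apply: eq_bigr => n _.
by rewrite big_setD_sub ?sub_block.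
Qed.

Lemma sum_between_blocks_transpose (f : T -> T -> R) :
  \sum_k \sum_(n in K k) \sum_(n' in A :\: K k) f n' n =
  \sum_k \sum_(n in K k) \sum_(n' in A :\: K k) f n n'.
Proof.
rewrite !sum_between_blocks exchange_big.
by congr (_ - _); apply: eq_bigr => k _; rewrite exchange_big.
Qed.

Lemma sum_out_of_blocks (f : T -> T -> R) :
  \sum_k \sum_(n in K k) \sum_(n' in ~: K k) f n n' =
  \sum_(n in A) \sum_(n' in ~: A) f n n' +
  \sum_k \sum_(n in K k) \sum_(n' in A :\: K k) f n n'.
Proof.
rewrite -(sum_blocks (fun n => \sum_(n' in ~: A) f n n')) -big_split /=.
apply: eq_bigr => k _; rewrite -big_split; apply: eq_bigr => n _ /=.
have -> : ~: A = ~: K k :\: A by rewrite setDE -setCU (setUidPr (sub_block k)).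
by rewrite (big_setID A) setIC -setDE addrC.
Qed.

End BlockSums.

Lemma cut_weight_symmetrize (R : realType) (N P : nat) (f : idx N P -> idx N P -> R)
    (Kbar : {set idx N P}) (K : idx2 P -> {set idx N P}) :
    \bigcup_k K k = Kbar -> (forall k k', k != k' -> [disjoint K k & K k']) ->
  cut_weight (symmetrize f) Kbar K =
    \sum_k \sum_(n in K k) \sum_(n' in Kbar :\: K k) f n n'.
Proof.
move=> cupK disjK; rewrite /cut_weight /symmetrize.
under eq_bigr => k _ do under eq_bigr => n _ do rewrite big_split.
under eq_bigr => k _ do rewrite big_split.
rewrite big_split /= sum_between_blocks_transpose //.
set S := (X in _ = X).
by rewrite -mulr2n -(mulr_natl S) mulKf ?pnatr_eq0.
Qed.

Lemma sum_SE_cut_weight {R : realType} {N P D M : nat} (x : dataset R N P D M)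
    {Kbar : {set idx N P}} {K : idx2 P -> {set idx N P}} :
    \bigcup_k K k = Kbar -> (forall k k', k != k' -> [disjoint K k & K k']) ->
  \sum_k SE x (K k) =
    \sum_(n in Kbar) \sum_(n' in ~: Kbar) pearson x n n' +
    cut_weight (symmetrize (pearson x)) Kbar K.
Proof.
by move=> cupK disjK; rewrite cut_weight_symmetrize // -sum_out_of_blocks.
Qed.

Theorem proposition5 (R : realType) (N P D M : nat)
  (x : dataset R N P D M) (Kbar : {set idx N P}) :
  (2 ^ P %| #|Kbar|)%N ->
  exists w : idx N P -> idx N P -> R,
    (forall n n', w n n' = w n' n) /\
    exists a b : R, 0 < a /\
      forall K : idx2 P -> {set idx N P},
        balanced_partition Kbar K ->
        cut_weight w Kbar K =
          a * ((2 ^+ P)^-1 * \sum_(k : idx2 P) SE x (K k)) + b.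
Proof.
move=> _; exists (symmetrize (pearson x)); split.
  by move=> n n'; rewrite /symmetrize addrC.
exists (2 ^+ P), (- \sum_(n in Kbar) \sum_(n' in ~: Kbar) pearson x n n').
split; first by rewrite exprn_gt0.
move=> K [cupK disjK _].
rewrite mulrA mulfV ?expf_neq0 ?pnatr_eq0 // mul1r.
by rewrite (sum_SE_cut_weight x cupK disjK) addrC addKr.
Qed.
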